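(* Let $E\in\mathbb{S}^n_{++}$ and $0<\alpha<\sqrt n$. Then $K_E(\alpha)^*=K_{E^{-1}}\big(\sqrt{n-\alpha^2}\big)$.
   Context: $\mathbb{S}^n$ is the space of real symmetric $n\times n$ matrices with the trace inner product, $\mathbb{S}^n_{++}$ the positive definite matrices. For $F\in\mathbb{S}^n_{++}$ and $\gamma\ge0$, $K_F(\gamma)=\{X\in\mathbb{S}^n:\mathrm{tr}(F^{-1}X)\ge\gamma\,\mathrm{tr}((F^{-1}X)^2)^{1/2}\}$. $K_E(\alpha)^*=\{S:\mathrm{tr}(XS)\ge0\ \forall X\in K_E(\alpha)\}$ is the dual cone with respect to the trace inner product. *)

From HB Require Import structures.
From mathcomp Require Import all_boot all_order all_algebra.
Set Implicit Arguments. Unset Strict Implicit. Unset Printing Implicit Defensive.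
Import Order.TTheory GRing.Theory Num.Theory.
Local Open Scope ring_scope.

Definition symmx (R : rcfType) (n : nat) (A : 'M[R]_n) : Prop := A^T = A.

Definition posdefmx (R : rcfType) (n : nat) (A : 'M[R]_n) : Prop :=
  symmx A /\ forall x : 'cV[R]_n, x != 0 -> 0 < (x^T *m A *m x) 0 0.

Definition Kcone (R : rcfType) (n : nat) (F : 'M[R]_n) (gamma : R)
    (X : 'M[R]_n) : Prop :=
  symmx X /\
  gamma * Num.sqrt (\tr ((invmx F *m X) *m (invmx F *m X))) <= \tr (invmx F *m X).

Definition dual_cone (R : rcfType) (n : nat) (K : 'M[R]_n -> Prop)
    (S : 'M[R]_n) : Prop :=
  symmx S /\ forall X : 'M[R]_n, K X -> 0 <= \tr (X *m S).

(* With P := E^-1, <X, Y> := tr (P X P Y) is an inner product on symmetric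
   matrices: P is a nonnegative combination of rank-one matrices v v^T (peel off
   one pivot at a time), so tr (P X P X) is a sum of terms (X v)^T P (X v) >= 0.
   In this inner product K_E(a) is the circular cone a |X| <= <X, E> around E,
   where |E|^2 = n; moreover tr (X S) = <X, E S E>, and S lies in K_{E^-1}(b) iff
   E S E lies in the circular cone with parameter b. Splitting X along E and its
   orthogonal complement, a-cone membership reads a sqrt(n) |X^perp| <= b <X, E>
   with a^2 + b^2 = n, which is symmetric in a and b. Cauchy-Schwarz then shows
   that the two cones pair nonnegatively, and testing a dual element against a
   boundary point of the a-cone whose orthogonal part opposes its own gives the
   converse. *)

From HB Require Import structures.
From mathcomp Require Import all_boot all_order all_algebra.
From mathcomp Require Import ring lra.
Import Order.TTheory GRing.Theory Num.Theory.
Local Open Scope ring_scope.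
Set Implicit Arguments. Unset Strict Implicit. Unset Printing Implicit Defensive.

Lemma ler_mul_sqrt (R : rcfType) (u q t : R) : 0 <= u -> 0 <= q ->
  (u * Num.sqrt q <= t) = (0 <= t) && (u ^+ 2 * q <= t ^+ 2).
Proof.
move=> u_ge0 q_ge0; have us_ge0 : 0 <= u * Num.sqrt q by rewrite mulr_ge0 ?sqrtr_ge0.
have [t_ge0|t_lt0] := leP 0 t; last by apply/negbTE; rewrite -ltNge (lt_le_trans t_lt0).
by rewrite -ler_sqr ?nnegrE // exprMn sqr_sqrtr.
Qed.

Lemma quadratic_ge0_disc (R : realFieldType) (a b c : R) : 0 <= c ->
  (forall t, 0 <= a - 2 * t * b + t ^+ 2 * c) -> b ^+ 2 <= a * c.
Proof.
move=> c_ge0 h; have [c_gt0|c0] := ltP 0 c.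
  have := h (b / c); rewrite -(pmulr_rge0 _ c_gt0).
  suff -> : c * (a - 2 * (b / c) * b + (b / c) ^+ 2 * c) = a * c - b ^+ 2 by rewrite subr_ge0.
  by field; rewrite gt_eqF.
have c_eq0 : c = 0 by apply/le_anti/andP.
rewrite {}c_eq0 {c_ge0 c0} in h *.
have [->|b_neq0] := eqVneq b 0; first by rewrite expr0n mulr0.
have := h ((a + 1) / (2 * b)).
suff -> : a - 2 * ((a + 1) / (2 * b)) * b + ((a + 1) / (2 * b)) ^+ 2 * 0 = -1 by rewrite ler0N1.
by field.
Qed.

Section CircularCone.
Variables (R : rcfType) (V : lmodType R) (ip : V -> V -> R) (sub : {pred V}).
Hypothesis ipC : forall x y, ip x y = ip y x.
Hypothesis ipDl : forall x y z, ip (x + y) z = ip x z + ip y z.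
Hypothesis ipZl : forall a x z, ip (a *: x) z = a * ip x z.
Hypothesis ip_ge0 : {in sub, forall x, 0 <= ip x x}.
Hypothesis sub_closed : GRing.submod_closed sub.

Lemma ipZr a x z : ip z (a *: x) = a * ip z x.
Proof. by rewrite ipC ipZl ipC. Qed.

Lemma ipNl x z : ip (- x) z = - ip x z.
Proof. by rewrite -scaleN1r ipZl mulN1r. Qed.

Lemma ipBl x y z : ip (x - y) z = ip x z - ip y z.
Proof. by rewrite ipDl ipNl. Qed.

Lemma ipBr x y z : ip z (x - y) = ip z x - ip z y.
Proof. by rewrite ipC ipBl !(ipC z). Qed.

Lemma sub_scaleB a b u v : u \in sub -> v \in sub -> a *: u - b *: v \in sub.
Proof.
case: sub_closed => sub0 sub_lin u_sub v_sub.
by rewrite -scaleNr addrC sub_lin // -[_ *: u]addr0 sub_lin.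
Qed.

Definition ipnorm x := Num.sqrt (ip x x).

Lemma ipnorm0 : ipnorm 0 = 0.
Proof. by rewrite /ipnorm -(scale0r (0 : V)) ipZl mul0r sqrtr0. Qed.

Lemma ipnormZ a x : ipnorm (a *: x) = `|a| * ipnorm x.
Proof. by rewrite /ipnorm ipZl ipZr mulrA -expr2 sqrtrM ?sqr_ge0 // sqrtr_sqr. Qed.

Lemma ip_cauchy_schwarz : {in sub &, forall x y, ip x y ^+ 2 <= ip x x * ip y y}.
Proof.
move=> x y x_sub y_sub; apply: quadratic_ge0_disc; first exact: ip_ge0.
move=> t; have := ip_ge0 (sub_scaleB 1 t x_sub y_sub).
rewrite scale1r ipBl !ipBr !ipZl !ipZr (ipC y x).
by congr (0 <= _); ring.
Qed.

Lemma normr_ip_le : {in sub &, forall x y, `|ip x y| <= ipnorm x * ipnorm y}.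
Proof.
move=> x y x_sub y_sub; rewrite -sqrtr_sqr -sqrtrM ?ip_ge0 //.
exact/ler_wsqrtr/ip_cauchy_schwarz.
Qed.

Variable e : V.
Hypothesis e_sub : e \in sub.
Hypothesis ipee_gt0 : 0 < ip e e.

Definition perp x := x - (ip x e / ip e e) *: e.

Lemma perp_sub x : x \in sub -> perp x \in sub.
Proof. by move=> x_sub; rewrite /perp -[x]scale1r sub_scaleB. Qed.

Lemma ip_perp_e x : ip (perp x) e = 0.
Proof. by rewrite /perp ipBl ipZl mulfVK ?subrr ?gt_eqF. Qed.

Lemma ip_perp_l x y : ip (perp x) y = ip (perp x) (perp y).
Proof. by rewrite [perp y]/perp ipBr ipZr ip_perp_e mulr0 subr0. Qed.

Lemma ip_decomp x y : ip x y = ip x e * ip y e / ip e e + ip (perp x) (perp y).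
Proof.
rewrite -ip_perp_l.
by rewrite /perp ipBl ipZl (ipC e y) addrCA mulrAC subrr addr0.
Qed.

Definition circular_cone (g : R) x := x \in sub /\ g * ipnorm x <= ip x e.

Lemma circular_coneE a b x : 0 <= a -> 0 < b -> a ^+ 2 + b ^+ 2 = ip e e ->
  x \in sub -> circular_cone a x <->
  0 <= ip x e /\ a * Num.sqrt (ip e e) * ipnorm (perp x) <= b * ip x e.
Proof.
move=> a_ge0 b_gt0 ab_e x_sub; rewrite /circular_cone x_sub /ipnorm.
have N_ge0 := ltW ipee_gt0.
have aN_ge0 : 0 <= a * Num.sqrt (ip e e) by rewrite mulr_ge0 ?sqrtr_ge0.
rewrite !ler_mul_sqrt ?ip_ge0 ?perp_sub // pmulr_rge0 //.
suff -> : (a ^+ 2 * ip x x <= ip x e ^+ 2) =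
  ((a * Num.sqrt (ip e e)) ^+ 2 * ip (perp x) (perp x) <= (b * ip x e) ^+ 2).
  by split=> [[_ /andP[-> ->]]|[_ ->]].
rewrite -subr_ge0 -[in RHS]subr_ge0 -(pmulr_rge0 _ ipee_gt0).
congr (0 <= _); rewrite !exprMn sqr_sqrtr // (ip_decomp x x) -ab_e.
field; rewrite ab_e gt_eqF //.
Qed.

Lemma circular_cone_self a b : 0 <= a -> 0 < b -> a ^+ 2 + b ^+ 2 = ip e e ->
  circular_cone a e.
Proof.
move=> a_ge0 b_gt0 ab_e; apply/(circular_coneE a_ge0 b_gt0 ab_e e_sub).
rewrite /perp mulfV ?gt_eqF // scale1r subrr ipnorm0 mulr0.
by rewrite !mulr_ge0 ?(ltW ipee_gt0) ?(ltW b_gt0).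
Qed.

Lemma circular_cone_dual_ge0 a b x z : 0 < a -> 0 < b -> a ^+ 2 + b ^+ 2 = ip e e ->
  circular_cone a x -> circular_cone b z -> 0 <= ip x z.
Proof.
move=> a_gt0 b_gt0 ab_e [x_sub xa] [z_sub zb].
have ba_e : b ^+ 2 + a ^+ 2 = ip e e by rewrite addrC.
have [xe_ge0 hx] := (circular_coneE (ltW a_gt0) b_gt0 ab_e x_sub).1 (conj x_sub xa).
have [ze_ge0 hz] := (circular_coneE (ltW b_gt0) a_gt0 ba_e z_sub).1 (conj z_sub zb).
have pq_le : ipnorm (perp x) * ipnorm (perp z) <= ip x e * ip z e / ip e e.
  set s := Num.sqrt (ip e e) in hx hz.
  have N_sq : ip e e = s ^+ 2 by rewrite sqr_sqrtr // ltW.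
  rewrite ler_pdivlMr // N_sq -(ler_pM2l (mulr_gt0 a_gt0 b_gt0)).
  have := ler_pM _ _ hx hz; rewrite !mulr_ge0 ?sqrtr_ge0 ?(ltW a_gt0) ?(ltW b_gt0) //.
  by move=> /(_ isT isT); nra.
have := normr_ip_le (perp_sub x_sub) (perp_sub z_sub); rewrite ler_norml => /andP[pq_ge _].
by rewrite ip_decomp; lra.
Qed.

Lemma circular_cone_of_dual a b z : 0 < a -> 0 < b -> a ^+ 2 + b ^+ 2 = ip e e ->
  z \in sub -> (forall x, circular_cone a x -> 0 <= ip x z) -> circular_cone b z.
Proof.
move=> a_gt0 b_gt0 ab_e z_sub dual.
have ba_e : b ^+ 2 + a ^+ 2 = ip e e by rewrite addrC.
have N_sq : Num.sqrt (ip e e) ^+ 2 = ip e e by rewrite sqr_sqrtr // ltW.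
apply/(circular_coneE (ltW b_gt0) a_gt0 ba_e z_sub).
set s := Num.sqrt (ip e e) in N_sq *; set q := ipnorm (perp z).
have s_ge0 : 0 <= s := sqrtr_ge0 _.
have q_ge0 : 0 <= q := sqrtr_ge0 _.
have ze_ge0 : 0 <= ip z e by rewrite ipC; apply/dual/(circular_cone_self (ltW a_gt0) b_gt0).
split => //.
(* A point on the boundary of the a-cone whose E-orthogonal part opposes that of z. *)
pose x := (a * q) *: e - (b * s) *: perp z.
have x_sub : x \in sub by apply: sub_scaleB; rewrite ?perp_sub.
have xe : ip x e = a * q * ip e e by rewrite ipBl !ipZl ip_perp_e mulr0 subr0.
have perp_x : perp x = (- (b * s)) *: perp z.
  by rewrite /perp xe mulfK ?gt_eqF // addrAC subrr add0r scaleNr.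
have x_cone : circular_cone a x.
  apply/(circular_coneE (ltW a_gt0) b_gt0 ab_e x_sub).
  rewrite xe perp_x ipnormZ normrN -/s -/q ger0_norm; last by rewrite mulr_ge0 // ltW.
  split; first by rewrite !mulr_ge0 // ltW.
  by rewrite -N_sq le_eqVlt; apply/orP; left; apply/eqP; ring.
have := dual _ x_cone.
rewrite ipBl !ipZl ip_perp_l (ipC e) -(sqr_sqrtr (ip_ge0 (perp_sub z_sub))).
rewrite -/(ipnorm (perp z)) -/q.
have [q_gt0|q_le0] := ltP 0 q; last first.
  have -> : q = 0 by apply/le_anti/andP.
  by move=> _; rewrite mulr0 mulr_ge0 // ltW.
by move=> h; rewrite -(ler_pM2l q_gt0); nra.
Qed.

Theorem dual_circular_cone a b z : 0 < a -> 0 < b -> a ^+ 2 + b ^+ 2 = ip e e ->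
  z \in sub -> (forall x, circular_cone a x -> 0 <= ip x z) <-> circular_cone b z.
Proof.
move=> a_gt0 b_gt0 ab_e z_sub; split; first exact: circular_cone_of_dual.
by move=> zb x xa; apply: circular_cone_dual_ge0 xa zb.
Qed.

End CircularCone.

Section PsdMatrix.
Variables (R : rcfType) (n : nat).
Implicit Types (A B : 'M[R]_n) (x y : 'cV[R]_n).

Definition mxform A x y := (x^T *m A *m y) 0 0.
Definition psdmx A := forall x, 0 <= mxform A x x.

Lemma mxformDl A x y z : mxform A (x + y) z = mxform A x z + mxform A y z.
Proof. by rewrite /mxform linearD /= !mulmxDl mxE. Qed.

Lemma mxformDr A x y z : mxform A z (x + y) = mxform A z x + mxform A z y.
Proof. by rewrite /mxform !mulmxDr mxE. Qed.

Lemma mxformZl A a x z : mxform A (a *: x) z = a * mxform A x z.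
Proof. by rewrite /mxform linearZ /= -!scalemxAl mxE. Qed.

Lemma mxformZr A a x z : mxform A z (a *: x) = a * mxform A z x.
Proof. by rewrite /mxform -!scalemxAr mxE. Qed.

Lemma mxformB A B c x y : mxform (A - c *: B) x y = mxform A x y - c * mxform B x y.
Proof. by rewrite /mxform mulmxBr mulmxBl -scalemxAr -scalemxAl !mxE. Qed.

Lemma mxformC A x y : A^T = A -> mxform A x y = mxform A y x.
Proof.
move=> symA; rewrite /mxform.
have -> : (x^T *m A *m y) 0 0 = (x^T *m A *m y)^T 0 0 by rewrite [RHS]mxE.
by rewrite !trmx_mul symA trmxK mulmxA.
Qed.

Lemma mxform_delta A i j : mxform A (delta_mx i 0) (delta_mx j 0) = A i j.
Proof. by rewrite /mxform trmx_delta -rowE -colE !mxE. Qed.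

Lemma psdmx_offdiag0 A i j : A^T = A -> psdmx A -> A i i = 0 -> A i j = 0.
Proof.
move=> symA psdA Aii0; have : (- A i j) ^+ 2 <= A j j * 0.
  apply: quadratic_ge0_disc => // t.
  have := psdA (t *: delta_mx i 0 + delta_mx j 0).
  rewrite !mxformDl !mxformDr !mxformZl !mxformZr !mxform_delta Aii0.
  have -> : A j i = A i j by rewrite -{1}symA mxE.
  by congr (0 <= _); ring.
by rewrite mulr0 sqrrN => Aij2_le0; apply/eqP; rewrite -sqrf_eq0 eq_le Aij2_le0 sqr_ge0.
Qed.

(* One step of symmetric Gaussian elimination with pivot A i i. *)
Definition peelmx A i := A - (A i i)^-1 *: (col i A *m (col i A)^T).

Lemma peelmxE A i k l : peelmx A i k l = A k l - (A i i)^-1 * (A k i * A l i).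
Proof. by rewrite !mxE big_ord1 !mxE. Qed.

Lemma peelmx_sym A i : A^T = A -> (peelmx A i)^T = peelmx A i.
Proof. by move=> symA; rewrite linearB linearZ /= trmx_mul trmxK symA. Qed.

Lemma mxform_peelmx A i x y : A^T = A ->
  mxform (peelmx A i) x y =
  mxform A x y - (A i i)^-1 * (mxform A x (delta_mx i 0) * mxform A (delta_mx i 0) y).
Proof.
move=> symA; rewrite mxformB; congr (_ - _ * _).
rewrite /mxform colE trmx_mul symA; set e : 'cV[R]_n := delta_mx i 0.
have -> : x^T *m (A *m e *m (e^T *m A)) *m y = (x^T *m A *m e) *m (e^T *m A *m y).
  by rewrite !mulmxA.
by rewrite [LHS]mxE big_ord1.
Qed.

Lemma peelmx_psd A i : A^T = A -> psdmx A -> 0 < A i i -> psdmx (peelmx A i).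
Proof.
move=> symA psdA Aii_gt0 x; rewrite mxform_peelmx //.
set e : 'cV[R]_n := delta_mx i 0; set b := mxform A e x.
rewrite (mxformC _ _ symA) -/b.
have := psdA (x + (- b / A i i) *: e).
rewrite !mxformDl !mxformDr !mxformZl !mxformZr mxform_delta (mxformC x e symA) -/b.
by congr (0 <= _); field; rewrite gt_eqF.
Qed.

Lemma psdmx_zero_diag A : A^T = A -> psdmx A -> (forall i, A i i = 0) -> A = 0.
Proof. by move=> symA psdA A0; apply/matrixP => i j; rewrite mxE psdmx_offdiag0. Qed.

Lemma psdmx_diag_gt0 A i : psdmx A -> A i i != 0 -> 0 < A i i.
Proof. by move=> psdA; rewrite lt_def => ->; have := psdA (delta_mx i 0); rewrite mxform_delta. Qed.

Lemma peelmx_supp_lt A i : A^T = A -> psdmx A -> A i i != 0 ->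
  (#|[pred j | peelmx A i j j != 0%R]| < #|[pred j | A j j != 0%R]|)%N.
Proof.
move=> symA psdA Aii_neq0; apply/proper_card/properP; split.
  apply/subsetP => j; rewrite !inE peelmxE; apply: contraNN => /eqP Ajj0.
  have Aji0 : A j i = 0 by exact: psdmx_offdiag0.
  by rewrite Ajj0 Aji0 !(mulr0, mul0r) subr0.
by exists i; rewrite !inE /= ?peelmxE ?mulrA ?mulVf // mul1r subrr eqxx.
Qed.

Lemma mxtrace_psdmx_mul_ge0 A B : A^T = A -> psdmx A -> psdmx B -> 0 <= \tr (A *m B).
Proof.
move=> + + psdB; have [k] := ubnP #|[pred i | A i i != 0]|.
elim: k A => // k IH A supp_lt symA psdA.
case: (pickP [pred i | A i i != 0]) => [i /= Aii_neq0 | /= A_diag0]; last first.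
  rewrite (psdmx_zero_diag symA psdA) ?mul0mx ?mxtrace0 // => i.
  by apply/eqP/negbFE/A_diag0.
have Aii_gt0 := psdmx_diag_gt0 psdA Aii_neq0.
rewrite -[A](subrK ((A i i)^-1 *: (col i A *m (col i A)^T))) -/(peelmx A i).
rewrite mulmxDl mxtraceD -scalemxAl mxtraceZ -mulmxA (mxtrace_mulC (col i A)) trace_mx11.
apply: addr_ge0; first apply: IH.
- exact: leq_trans (peelmx_supp_lt symA psdA Aii_neq0) _.
- exact: peelmx_sym.
- exact: peelmx_psd.
by rewrite mulr_ge0 ?invr_ge0 ?(ltW Aii_gt0) //; apply: psdB.
Qed.

End PsdMatrix.

Lemma posdefmx_unit (R : rcfType) n (E : 'M[R]_n) : posdefmx E -> E \in unitmx.
Proof.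
move=> [_ posE]; rewrite -row_free_unit -kermx_eq0; apply/rowV0P => v /sub_kermxP vE0.
apply/eqP/negPn/negP => v_neq0.
have := posE v^T; rewrite trmx_eq0 => /(_ v_neq0).
by rewrite trmxK vE0 mul0mx mxE ltxx.
Qed.

Lemma posdefmx_invmx_psd (R : rcfType) n (E : 'M[R]_n) : posdefmx E -> psdmx (invmx E).
Proof.
move=> posE x; have E_unit := posdefmx_unit posE; case: posE => symE posE.
have -> : mxform (invmx E) x x = ((invmx E *m x)^T *m E *m (invmx E *m x)) 0 0.
  rewrite /mxform trmx_mul trmx_inv symE -!mulmxA (mulmxA E) mulmxV // mul1mx.
  by rewrite !mulmxA.
have [->|y_neq0] := eqVneq (invmx E *m x) 0; first by rewrite mulmx0 mxE.
exact/ltW/posE.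
Qed.

Section TraceForm.
Variables (R : rcfType) (n : nat).
Implicit Types (P X Y : 'M[R]_n).

Definition symmetric_mx : {pred 'M[R]_n} := [pred X | X^T == X].

Lemma symmetric_mx_submod_closed : GRing.submod_closed symmetric_mx.
Proof.
split=> [|a X Y]; rewrite !inE ?trmx0 // => /eqP symX /eqP symY.
by rewrite linearD linearZ /= symX symY.
Qed.

Definition trform P X Y := \tr (P *m X *m P *m Y).

Lemma trformC P X Y : trform P X Y = trform P Y X.
Proof. by rewrite /trform -[P *m X *m P *m Y]mulmxA mxtrace_mulC !mulmxA. Qed.

Lemma trformDl P X Y Z : trform P (X + Y) Z = trform P X Z + trform P Y Z.
Proof. by rewrite /trform mulmxDr !mulmxDl mxtraceD. Qed.

Lemma trformZl P a X Z : trform P (a *: X) Z = a * trform P X Z.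
Proof. by rewrite /trform -scalemxAr -!scalemxAl mxtraceZ. Qed.

Lemma trform_ge0 P : P^T = P -> psdmx P -> {in symmetric_mx, forall X, 0 <= trform P X X}.
Proof.
move=> symP psdP X /eqP symX; rewrite /trform -!mulmxA.
apply: mxtrace_psdmx_mul_ge0 => // v.
by have := psdP (X *m v); rewrite /mxform trmx_mul symX !mulmxA.
Qed.

End TraceForm.

Arguments symmetric_mx {R n}.

Section PosdefCone.
Variables (R : rcfType) (n : nat) (E : 'M[R]_n).
Hypothesis posE : posdefmx E.

Let mulVmxE : invmx E *m E = 1%:M. Proof. exact/mulVmx/posdefmx_unit. Qed.
Let mulmxVE : E *m invmx E = 1%:M. Proof. exact/mulmxV/posdefmx_unit. Qed.

Lemma trform_invmx_self : trform (invmx E) E E = n%:R.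
Proof. by rewrite /trform mulVmxE mul1mx mulVmxE mxtrace1. Qed.

Lemma Kcone_circular_cone g X :
  Kcone E g X <-> circular_cone (trform (invmx E)) symmetric_mx E g X.
Proof.
rewrite /Kcone /circular_cone /ipnorm /trform inE -[_ *m E]mulmxA mulVmxE mulmx1 !mulmxA.
by split=> -[symX ?]; split=> //; apply/eqP.
Qed.

Lemma mxtrace_mul_trform X S : \tr (X *m S) = trform (invmx E) X (E *m S *m E).
Proof.
rewrite /trform !mulmxA -(mulmxA _ (invmx E) E) mulVmxE mulmx1.
by rewrite [RHS]mxtrace_mulC !mulmxA mulmxVE mul1mx.
Qed.

Lemma conj_symmetric_mx S : symmx S -> E *m S *m E \in symmetric_mx.
Proof.
have symE : E^T = E by case: posE.
by move=> symS; rewrite inE !trmx_mul symS symE mulmxA.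
Qed.

Lemma Kcone_invmx_circular_cone g S : symmx S ->
  Kcone (invmx E) g S <-> circular_cone (trform (invmx E)) symmetric_mx E g (E *m S *m E).
Proof.
move=> symS; rewrite /Kcone /circular_cone /ipnorm conj_symmetric_mx // invmxK.
rewrite -mxtrace_mul_trform trformC -mxtrace_mul_trform mulmxA.
by split=> -[].
Qed.

Lemma dual_trform_circular_cone a b Z : 0 < a -> 0 < b -> a ^+ 2 + b ^+ 2 = n%:R ->
  Z \in symmetric_mx ->
  (forall X, circular_cone (trform (invmx E)) symmetric_mx E a X -> 0 <= trform (invmx E) X Z)
  <-> circular_cone (trform (invmx E)) symmetric_mx E b Z.
Proof.
move=> a_gt0 b_gt0 ab_n Z_sym; have [symE _] := posE.
have symP : (invmx E)^T = invmx E by rewrite trmx_inv symE.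
have E_sym : E \in symmetric_mx by rewrite inE symE.
have ipee_gt0 : 0 < trform (invmx E) E E.
  by rewrite trform_invmx_self -ab_n ltr_pwDl ?sqr_ge0 ?exprn_gt0.
apply: (dual_circular_cone (@trformC _ _ _) (@trformDl _ _ _) (@trformZl _ _ _)
  (trform_ge0 symP (posdefmx_invmx_psd posE)) (@symmetric_mx_submod_closed R n)
  E_sym ipee_gt0 a_gt0 b_gt0 _ Z_sym).
by rewrite trform_invmx_self.
Qed.

End PosdefCone.

Theorem lemma3p1 (R : rcfType) (n : nat) (E : 'M[R]_n) (alpha : R) :
  posdefmx E -> 0 < alpha -> alpha < Num.sqrt (n%:R) ->
  forall S : 'M[R]_n,
    dual_cone (Kcone E alpha) S <->
    Kcone (invmx E) (Num.sqrt (n%:R - alpha ^+ 2)) S.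
Proof.
move=> posE a_gt0 a_lt_sqrtn S; set b := Num.sqrt _.
have a2_lt_n : alpha ^+ 2 < n%:R.
  by rewrite -ltr_sqrt ?sqrtr_sqr ?gtr0_norm // -sqrtr_gt0 (lt_trans a_gt0).
have b_gt0 : 0 < b by rewrite sqrtr_gt0 subr_gt0.
have ab_n : alpha ^+ 2 + b ^+ 2 = n%:R by rewrite sqr_sqrtr ?subr_ge0 ?ltW // addrC subrK.
have dual Z := dual_trform_circular_cone posE (Z := Z) a_gt0 b_gt0 ab_n.
split=> [[symS dualS] | KS].
  apply/(Kcone_invmx_circular_cone posE _ symS)/dual; first exact: conj_symmetric_mx.
  by move=> X /(Kcone_circular_cone posE) XK; rewrite -(mxtrace_mul_trform posE); apply: dualS.
have symS : symmx S by case: KS.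
split=> // X /(Kcone_circular_cone posE) XK; rewrite (mxtrace_mul_trform posE).
apply: (dual _ (conj_symmetric_mx posE symS)).2 _ _ XK.
exact/(Kcone_invmx_circular_cone posE _ symS).
Qed.
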